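(* Let $G$ be a non-regular simple graph on $n$ vertices, and let $u,v$ be vertices of $G$ with $d_G(u)<d_G(v)$. Let $R:=V(G)\setminus\{u,v\}$. If $F_k(G)$ is regular for some integer $k$ with $2\le k\le n-2$, then $d_R(u)=0$, i.e. $u$ has no neighbor in $R$.
   Context: For a simple graph $G=(V,E)$ on $n$ vertices and an integer $1\le k<n$, the $k$-token graph $F_k(G)$ is the graph whose vertices are all $k$-element subsets of $V$, two such subsets $A,B$ being adjacent whenever their symmetric difference $A\triangle B$ is a pair $\{a,b\}$ with $a$ adjacent to $b$ in $G$. For $X\subseteq V$ and $x\in V$, $d_X(x)$ is the number of neighbors of $x$ in $X$; $d_G(x)$ is the degree of $x$ in $G$. *)

From mathcomp Require Import all_boot.
Set Implicit Arguments. Unset Strict Implicit. Unset Printing Implicit Defensive.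

Definition simple_graph (T : finType) (e : rel T) : Prop :=
  symmetric e /\ irreflexive e.

Definition deg (T : finType) (e : rel T) (x : T) : nat := #|[set y | e x y]|.

Definition deg_in (T : finType) (e : rel T) (X : {set T}) (x : T) : nat :=
  #|[set y in X | e x y]|.

Definition regular_graph (T : finType) (e : rel T) : Prop :=
  forall x y : T, deg e x = deg e y.

Definition symdiff (T : finType) (A B : {set T}) : {set T} := (A :\: B) :|: (B :\: A).

(* adjacency in the k-token graph F_k(G) (on k-subsets) *)
Definition token_adj (T : finType) (e : rel T) (A B : {set T}) : bool :=
  [exists a, exists b, (symdiff A B == [set a; b]) && e a b].

Definition token_deg (T : finType) (e : rel T) (k : nat) (A : {set T}) : nat :=
  #|[set B : {set T} | (#|B| == k) && token_adj e A B]|.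

Definition token_regular (T : finType) (e : rel T) (k : nat) : Prop :=
  forall A B : {set T}, #|A| = k -> #|B| = k -> token_deg e k A = token_deg e k B.

From mathcomp Require Import all_boot.
From mathcomp Require Import zify.
Set Implicit Arguments. Unset Strict Implicit. Unset Printing Implicit Defensive.

(* The degree of a k-set A in F_k(G) is the number cut(A) of edges of G leaving A.
   Adding a vertex p to a set X gives cut(p + X) = cut X + d(p) - 2 d_X(p), so
   comparing the k-sets u + Z and v + Z, for |Z| = k - 1, regularity of F_k(G)
   forces d(u) + 2 d_Z(v) = d(v) + 2 d_Z(u).  Taking Z = w + S and Z = y + S for a
   common (k-2)-set S avoiding u, v, w, y and subtracting yields
   e(u,w) + e(v,y) = e(v,w) + e(u,y).  If u had a neighbour w outside {u, v}, this
   identity would make every neighbour y of v other than u a neighbour of u, hence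
   d(v) <= d(u). *)

Section Swap.
Variable T : finType.
Implicit Types (A B : {set T}) (a b c d : T).

Lemma cards_swap A a b : a \in A -> b \notin A -> #|b |: A :\ a| = #|A|.
Proof.
by move=> aA bA; rewrite cardsU1 !inE negb_and bA orbT [RHS](cardsD1 a) aA.
Qed.

Lemma symdiff_swap A a b :
  a \in A -> b \notin A -> symdiff A (b |: A :\ a) = [set a; b].
Proof.
move=> aA bA; have ab : a != b by apply: contraNneq bA => <-.
apply/setP => x; rewrite /symdiff !inE.
have [->|xa] := eqVneq x a; first by rewrite aA (negbTE ab).
have [->|xb] := eqVneq x b; first by rewrite (negbTE bA).
by case: (x \in A).
Qed.

Lemma swap_inj A a b c d : a \in A -> b \notin A -> c \in A -> d \notin A ->
  b |: A :\ a = d |: A :\ c -> a = c /\ b = d.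
Proof.
move=> aA bA cA dA eq_swap.
have /setP E := symdiff_swap aA bA; rewrite eq_swap (symdiff_swap cA dA) in E.
have ad : a != d by apply: contraNneq dA => <-.
have bc : b != c by apply: contraNneq bA => ->.
move: (E a) (E b); rewrite !inE !eqxx orbT /= (negbTE ad) (negbTE bc) orbF.
by move=> /eqP <- /eqP <-.
Qed.

Lemma swap_of_card_symdiff2 A B : #|A| = #|B| -> #|symdiff A B| = 2 ->
  exists a b, [/\ a \in A, b \notin A & B = b |: A :\ a].
Proof.
move=> cAB c2.
have disj : (A :\: B) :&: (B :\: A) = set0.
  by apply/setP => x; rewrite !inE; case: (x \in A); case: (x \in B).
have cD : #|A :\: B| = #|B :\: A| by rewrite !cardsD cAB setIC.
move: c2; rewrite /symdiff cardsU disj cards0 subn0 -cD => c2.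
have /cards1P[a Ea] : #|A :\: B| == 1 by apply/eqP; lia.
have /cards1P[b Eb] : #|B :\: A| == 1 by apply/eqP; lia.
have /setP EA := Ea; have /setP EB := Eb.
move: (EA a) (EB b); rewrite !inE !eqxx => /andP[_ aA] /andP[bA _].
exists a, b; split=> //; apply/setP => x.
move: (EA x) (EB x); rewrite !inE.
by case: (x \in A); case: (x \in B); case: (x == a); case: (x == b).
Qed.

End Swap.

Lemma card_sep_sum (T : finType) (X : {set T}) (P : pred T) :
  #|[set y in X | P y]| = \sum_(y in X) P y.
Proof.
rewrite -sum1dep_card big_mkcondr /=.
by apply: eq_bigr => i _; case: (P i).
Qed.

Section TokenGraph.
Variables (T : finType) (e : rel T).
Hypotheses (e_sym : symmetric e) (e_irr : irreflexive e).
Implicit Types (A S X Z : {set T}) (a b p u v w x y : T).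

Definition cut A : nat := \sum_(a in A) \sum_(b | b \notin A) e a b.

Lemma set2_edge a b x y : [set a; b] = [set x; y] -> e x y -> e a b.
Proof.
move=> /setP E exy.
have xy : x != y by apply: contraTneq exy => ->; rewrite e_irr.
move: (E x) (E y) xy exy; rewrite !inE !eqxx orbT /=.
by case/orP=> /eqP -> /orP[] /eqP ->; rewrite ?eqxx // e_sym.
Qed.

Lemma token_neighbours k A : #|A| = k ->
  [set B : {set T} | (#|B| == k) && token_adj e A B] =
  (fun ab : T * T => ab.2 |: A :\ ab.1) @:
    [set ab : T * T | [&& ab.1 \in A, ab.2 \notin A & e ab.1 ab.2]].
Proof.
move=> cA; apply/setP => B; rewrite inE; apply/andP/imsetP.
- case=> /eqP cB /existsP[x /existsP[y /andP[/eqP Exy exy]]].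
  have xy : x != y by apply: contraTneq exy => ->; rewrite e_irr.
  have [|a [b [aA bA EB]]] := swap_of_card_symdiff2 (etrans cA (esym cB)).
    by rewrite Exy cards2 xy.
  rewrite EB symdiff_swap // in Exy.
  by exists (a, b); rewrite // inE /= aA bA (set2_edge Exy exy).
- case=> -[a b]; rewrite inE /= => /and3P[aA bA eab] ->.
  rewrite cards_swap // cA eqxx; split=> //.
  by apply/existsP; exists a; apply/existsP; exists b; rewrite symdiff_swap ?eqxx.
Qed.

Lemma token_deg_cut k A : #|A| = k -> token_deg e k A = cut A.
Proof.
move=> cA; rewrite /token_deg (token_neighbours cA) card_in_imset; last first.
  move=> [a b] [c d]; rewrite !inE /= => /and3P[aA bA _] /and3P[cA' dA _].
  by case/(swap_inj aA bA cA' dA) => -> ->.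
rewrite /cut pair_big_dep /= -sum1dep_card big_mkcond [RHS]big_mkcond /=.
apply: eq_bigr => -[a b] _ /=.
by case: (a \in A); case: (b \in A); case: (e a b).
Qed.

Lemma cut_setU1 X p : p \notin X ->
  cut (p |: X) + 2 * deg_in e X p = cut X + deg e p.
Proof.
move=> pX.
have split_p a : \sum_(b | b \notin X) (e a b : nat) =
                 e a p + \sum_(b | b \notin p |: X) (e a b : nat).
  rewrite (bigD1 p) //=; congr (_ + _); apply: eq_bigl => b.
  by rewrite !inE negb_or andbC.
have cutX : cut X = deg_in e X p + \sum_(a in X) \sum_(b | b \notin p |: X) (e a b : nat).
  rewrite /cut /deg_in card_sep_sum -big_split /=.
  by apply: eq_bigr => a _; rewrite split_p e_sym.
have deg_p : deg e p = deg_in e X p + \sum_(b | b \notin X) (e p b : nat).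
  rewrite /deg_in card_sep_sum /deg -sum1dep_card big_mkcond (bigID (mem X)) /=.
  by congr (_ + _); apply: eq_bigr => y _; case: (e p y).
rewrite split_p e_irr /= in deg_p.
rewrite /cut big_setU1 //= -/(cut X) cutX deg_p; lia.
Qed.

Lemma deg_in_setU1 S x p :
  x \notin S -> deg_in e (x |: S) p = e p x + deg_in e S p.
Proof. by move=> xS; rewrite /deg_in !card_sep_sum big_setU1. Qed.

Variable k : nat.
Hypothesis regular_Fk : token_regular e k.

Lemma token_regular_deg_balance Z u v : #|Z|.+1 = k -> u \notin Z -> v \notin Z ->
  deg e u + 2 * deg_in e Z v = deg e v + 2 * deg_in e Z u.
Proof.
move=> cZ uZ vZ.
have cU : #|u |: Z| = k by rewrite cardsU1 uZ.
have cV : #|v |: Z| = k by rewrite cardsU1 vZ.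
have := regular_Fk cU cV; rewrite !token_deg_cut //.
have := cut_setU1 uZ; have := cut_setU1 vZ; lia.
Qed.

Lemma token_regular_edge_exchange u v w y : 2 <= k <= #|T| - 2 ->
  w != u -> w != v -> y != u -> y != v ->
  e u w + e v y = e v w + e u y.
Proof.
move=> /andP[k_ge2 k_le] wu wv yu yv.
pose Q := [set u; v; w; y].
have cQ : #|Q| <= 4.
  have -> : Q = [set x in [:: u; v; w; y]] by apply/setP => x; rewrite !inE !orbA.
  by rewrite cardsE (leq_trans (card_size _)).
have /card_geqP[s [s_uniq s_size s_sub]] : k - 2 <= #|~: Q|.
  by have := cardsC Q; lia.
pose S := [set x in s].
have cS : #|S| = k - 2 by rewrite cardsE (card_uniqP s_uniq).
have notinS x : x \in Q -> x \notin S.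
  by move=> xQ; rewrite inE; apply/negP => /s_sub; rewrite inE xQ.
have balance z : z \in Q -> z != u -> z != v ->
    deg e u + 2 * (e v z + deg_in e S v) = deg e v + 2 * (e u z + deg_in e S u).
  move=> zQ zu zv; have zS := notinS z zQ.
  rewrite -!deg_in_setU1 //; apply: token_regular_deg_balance.
  - by rewrite cardsU1 zS cS; lia.
  - by rewrite in_setU1 negb_or eq_sym zu notinS // !inE eqxx.
  - by rewrite in_setU1 negb_or eq_sym zv notinS // !inE eqxx ?orbT.
have := balance w; have := balance y; rewrite !inE !eqxx ?orbT.
by move=> /(_ isT yu yv) + /(_ isT wu wv); lia.
Qed.

End TokenGraph.

Theorem lemma4 (T : finType) (e : rel T) (u v : T) (k : nat) :
  simple_graph e ->
  ~ regular_graph e ->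
  deg e u < deg e v ->
  2 <= k <= #|T| - 2 ->
  token_regular e k ->
  deg_in e (~: [set u; v]) u = 0.
Proof.
(* Non-regularity of G is already witnessed by deg u < deg v. *)
move=> [e_sym e_irr] _ lt_uv k_range regular_Fk.
rewrite /deg_in; case: (set_0Vmem [set y in ~: [set u; v] | e u y]) => [-> | [w]].
  exact: cards0.
rewrite !inE negb_or => /andP[/andP[wu wv] euw].
have Nv_sub_Nu : [set y | e v y] :\ u \subset [set y | e u y] :\ v.
  apply/subsetP => y; rewrite !inE => /andP[yu evy].
  have yv : y != v by apply: contraTneq evy => ->; rewrite e_irr.
  have := token_regular_edge_exchange e_sym e_irr regular_Fk k_range wu wv yu yv.
  by rewrite yv euw evy; case: (e v w); case: (e u y).
move: lt_uv (subset_leq_card Nv_sub_Nu).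
rewrite /deg (cardsD1 u [set y | e v y]) (cardsD1 v [set y | e u y]) !inE e_sym.
by case: (e u v); lia.
Qed.
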